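(* Let $\lambda_{\max}>1$ and let $F:[0,\lambda_{\max}]\to\mathbb{R}_+$ be continuously differentiable with $F(0)=0$, such that $F(x)<F^\star$ for all $x\in[0,1)$, $F'(1)>0$, and $F$ is concave-like. Then $F(x)\le F'(1)(x-1)+F(1)$ for all $x\in[0,\lambda_{\max}]$.
   Context: $F^\star=\sup\{\mathbb{E}_\alpha[F(X)]:\alpha$ a probability measure on $[0,\lambda_{\max}]$, $X\sim\alpha$, $\mathbb{E}_\alpha[X]\le1\}$. $F$ is concave-like if for all $x_1,x_2\in[0,\lambda_{\max}]\setminus\{1\}$, $p\in(0,1)$ with $px_1+(1-p)x_2=1$, we have $F(1)>pF(x_1)+(1-p)F(x_2)$. *)

From HB Require Import structures.
From mathcomp Require Import all_boot all_order all_algebra.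
From mathcomp Require Import all_classical all_reals all_analysis.
Set Implicit Arguments. Unset Strict Implicit. Unset Printing Implicit Defensive.
Import Order.TTheory GRing.Theory Num.Theory.
Import numFieldNormedType.Exports.
Local Open Scope classical_set_scope.
Local Open Scope ring_scope.

Definition admissible (R : realType) (lmax : R) (P : probability R R) : Prop :=
  P [set` `[0%R, lmax]] = 1%E /\ (\int[P]_(x in [set` `[0%R, lmax]]) x%:E <= 1%:E)%E.

Definition Fstar (R : realType) (lmax : R) (F : R -> R) : \bar R :=
  ereal_sup [set (\int[P]_(x in [set` `[0%R, lmax]]) (F x)%:E)%E
            | P in [set P : probability R R | admissible lmax P]].

Definition concave_like (R : realType) (lmax : R) (F : R -> R) : Prop :=
  forall x1 x2 p : R, x1 \in `[0, lmax] -> x2 \in `[0, lmax] ->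
    x1 != 1 -> x2 != 1 -> p \in `]0, 1[ ->
    p * x1 + (1 - p) * x2 = 1 ->
    p * F x1 + (1 - p) * F x2 < F 1.

From HB Require Import structures.
From mathcomp Require Import all_boot all_order all_algebra.
From mathcomp Require Import all_classical all_reals all_analysis.
From mathcomp Require Import ring lra.
Import Order.TTheory GRing.Theory Num.Theory.
Import numFieldNormedType.Exports.
Local Open Scope classical_set_scope.
Local Open Scope ring_scope.
Set Implicit Arguments.
Unset Strict Implicit.
Unset Printing Implicit Defensive.

(* Concave-likeness at 1 says exactly that every secant from 1 to a point on
   its right is strictly flatter than every secant from 1 to a point on its
   left.  Letting the right point tend to 1 bounds the left secant slopes
   from below by F'(1), and letting the left point tend to 1 bounds the right
   secant slopes from above by F'(1); both bounds say that the graph of F lies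
   below its tangent at 1. *)

Section SecantSlope.
Variable R : realType.
Implicit Types (f : R -> R) (a c y K : R).

Definition secant_slope f c y := (f y - f c) / (y - c).

Lemma secant_slopeK f c y : y != c -> secant_slope f c y * (y - c) = f y - f c.
Proof. by move=> yc; rewrite /secant_slope divfK // subr_eq0. Qed.

Lemma derive1_secant_slope_cvg f c : derivable f c 1 ->
  secant_slope f c (h + c) @[h --> 0^'] --> derive1 f c.
Proof.
have slopeE : (fun h => h^-1 *: ((f \o shift c) (h *: 1) - f c)) =
    (fun h => secant_slope f c (h + c)).
  by apply/funext => h; rewrite /secant_slope /= addrK [h%:A]mulr1 [RHS]mulrC.
by rewrite derive1E /derivable /derive slopeE.
Qed.

Lemma derive1_le_secant_slope_right f c a K : derivable f c 1 -> 0 < a ->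
  (forall y, c < y < c + a -> secant_slope f c y <= K) -> derive1 f c <= K.
Proof.
move=> df a_gt0 slopeK.
have /cvgr_to_le := cvg_dnbhs_at_right (derive1_secant_slope_cvg df); apply.
near=> h; apply: slopeK; rewrite ltrDr [h + c]addrC ltrD2l.
by apply/andP; split; near: h; [exact: nbhs_right_gt | exact: nbhs_right_lt].
Unshelve. all: by end_near. Qed.

Lemma secant_slope_left_le_derive1 f c a K : derivable f c 1 -> 0 < a ->
  (forall y, c - a < y < c -> K <= secant_slope f c y) -> K <= derive1 f c.
Proof.
move=> df a_gt0 slopeK.
have /cvgr_to_ge := cvg_dnbhs_at_left (derive1_secant_slope_cvg df); apply.
near=> h; apply: slopeK; rewrite gtrDr [h + c]addrC ltrD2l.
apply/andP; split; near: h; last exact: nbhs_left_lt.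
by apply: nbhs_left_gt; rewrite oppr_lt0.
Unshelve. all: by end_near. Qed.

End SecantSlope.

Lemma concave_like_secant_slope_lt (R : realType) (lmax : R) (F : R -> R)
    (x1 x2 : R) :
  concave_like lmax F -> 0 <= x1 -> x1 < 1 -> 1 < x2 -> x2 <= lmax ->
  secant_slope F 1 x2 < secant_slope F 1 x1.
Proof.
move=> Fcl x1_ge0 x1_lt1 x2_gt1 x2_le.
pose p := (x2 - 1) / (x2 - x1).
have p_gt0 : 0 < p by rewrite divr_gt0 //; lra.
have p_lt1 : p < 1 by rewrite ltr_pdivrMr; lra.
have p_comb : p * x1 + (1 - p) * x2 = 1 by rewrite /p; field; lra.
have := Fcl x1 x2 p; rewrite !in_itv /= p_gt0 p_lt1 (lt_eqF x1_lt1) (gt_eqF x2_gt1).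
have -> : 0 <= x1 <= lmax by apply/andP; split; lra.
have -> : 0 <= x2 <= lmax by apply/andP; split; lra.
move=> /(_ isT isT isT isT isT p_comb).
have -> : p * F x1 + (1 - p) * F x2 = F 1 +
    (x2 - 1) * (1 - x1) / (x2 - x1) * (secant_slope F 1 x2 - secant_slope F 1 x1).
  by rewrite /p /secant_slope; field; lra.
rewrite gtrDl pmulr_rlt0 ?subr_lt0 // !divr_gt0 ?mulr_gt0 //; lra.
Qed.

Theorem lemmaC1 (R : realType) (lmax : R) (F : R -> R)
  (Hlmax : 1 < lmax)
  (HFder : forall x, x \in `[0, lmax] -> derivable F x 1)
  (HFC1 : {within `[0, lmax], continuous (derive1 F)})
  (HFpos : forall x, x \in `[0, lmax] -> 0 <= F x)
  (HF0 : F 0 = 0)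
  (HFstar : forall x, x \in `[0, 1[ -> ((F x)%:E < Fstar lmax F)%E)
  (HFd1 : 0 < (derive1 F) 1)
  (Hcl : concave_like lmax F) :
  forall x, x \in `[0, lmax] -> F x <= (derive1 F) 1 * (x - 1) + F 1.
Proof.
move=> x; rewrite in_itv /= => /andP[x_ge0 x_le].
have dF1 : derivable F 1 1 by apply: HFder; rewrite in_itv /=; lra.
rewrite -lerBlDr.
case: (ltrgtP x 1) => [x_lt1 | x_gt1 | ->]; last by rewrite !subrr mulr0.
- have : derive1 F 1 <= secant_slope F 1 x.
    apply: (derive1_le_secant_slope_right dF1 (_ : 0 < lmax - 1)); first lra.
    move=> y /andP[y_gt1 y_lt].
    by apply/ltW/(concave_like_secant_slope_lt Hcl); lra.
  by rewrite -(secant_slopeK F (negbT (lt_eqF x_lt1))) ler_nM2r // subr_lt0.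
- have : secant_slope F 1 x <= derive1 F 1.
    apply: (secant_slope_left_le_derive1 dF1 ltr01).
    move=> y /andP[y_gt0 y_lt1].
    by apply/ltW/(concave_like_secant_slope_lt Hcl); lra.
  by rewrite -(secant_slopeK F (negbT (gt_eqF x_gt1))) ler_pM2r // subr_gt0.
Qed.
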